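(* Let $z_1,\dots,z_N$ be independent with $z_i\sim\mathrm{Bernoulli}(q_i)$, $0<q_i<1$ for every $i\in[N]$, and let $S=\sum_{i=1}^Nz_i$. If $\min_{i\in[N]}q_i>\frac1N$, then $\Pr\{S>N\min_{i\in[N]}q_i\}>\frac14$. *)

From HB Require Import structures.
From mathcomp Require Import all_boot all_order all_algebra.
From mathcomp Require Import all_classical all_reals all_analysis.
Set Implicit Arguments. Unset Strict Implicit. Unset Printing Implicit Defensive.
Import Order.TTheory GRing.Theory Num.Theory.
Local Open Scope classical_set_scope.
Local Open Scope ring_scope.

(* z_1,...,z_N are mutually independent Bernoulli(q_i) random variables on
   the probability space (T, P), encoded as boolean-valued maps
   (z i w = true  <->  z_i(w) = 1).
   - each event {z_i = 1} is measurable;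
   - P{z_i = 1} = q_i;
   - mutual independence of the discrete random variables: the joint
     probability mass function factorizes,
       P{z_1 = b_1, ..., z_N = b_N} = prod_i P{z_i = b_i}
     for every b in {0,1}^N. *)
Definition indep_bernoulli (d : measure_display) (T : measurableType d)
  (R : realType) (P : probability T R) (N : nat)
  (z : 'I_N -> T -> bool) (q : 'I_N -> R) : Prop :=
  [/\ (forall i, measurable [set w | z i w]),
      (forall i, P [set w | z i w] = (q i)%:E) &
      (forall b : 'I_N -> bool,
         P [set w | forall i, z i w = b i] =
         (\prod_(i < N) fine (P [set w | z i w = b i]))%:E)].

Definition bsum (T : Type) (R : realType) (N : nat) (z : 'I_N -> T -> bool)
  (w : T) : R := (\sum_(i < N) (z i w : nat))%:R.

(* min_{i in [N]} q_i (meaningful for N >= 1) *)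
Definition qmin (R : realType) (N : nat) (q : 'I_N -> R) : R :=
  \big[Order.min/1]_(i < N) q i.

From HB Require Import structures.
From mathcomp Require Import all_boot all_order all_algebra.
From mathcomp Require Import all_classical all_reals all_analysis.
From mathcomp.real_closed Require Import polyrcf.
From mathcomp Require Import ring lra.
Import Order.TTheory GRing.Theory Num.Theory.
Local Open Scope classical_set_scope.
Local Open Scope ring_scope.

(* Let p = min q_i and m = floor(N p) >= 1, so that {S > N p} = {S >= m + 1}.
   The tail P(S >= k) of a sum of independent Bernoulli variables is
   nondecreasing in each success probability, hence
   P(S >= m + 1) >= P(Bin(N, p) >= m + 1) >= P(Bin(N, m/N) >= m + 1).
   For a fixed mean m, P(Bin(n, m/n) >= m + 1) is nondecreasing in n, so it is
   at least its value (m/(m+1))^(m+1) at n = m + 1. By AM-GM (k/(k+1))^(k+1)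
   increases with k: it exceeds 1/4 for k >= 2 and equals 1/4 for k = 1,
   where the strict inequality comes instead from p > 1/N. *)

Lemma all2_nseql (T S : Type) (rel : T -> S -> bool) x (s : seq S) :
  all (rel x) s -> all2 rel (nseq (size s) x) s.
Proof. by elim: s => //= y s IH /andP[-> /IH]. Qed.

Definition nsucc {N} (f : 'I_N -> bool) : nat := \sum_(i < N) f i.

Lemma nsucc_le N (f : 'I_N -> bool) : (nsucc f <= N)%N.
Proof.
rewrite -[X in (_ <= X)%N]card_ord -sum1_card.
by apply: leq_sum => i _; apply: leq_b1.
Qed.

Lemma deriv1 (R : nzRingType) : (1 : {poly R})^`() = 0.
Proof. by rewrite -polyC1 derivC. Qed.

Section PoissonBinomial.
Context {R : comNzRingType}.
Implicit Types (r : R) (s : seq R).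

(* [poibin s k] and [poibin_tail s k] are P(S = k) and P(S >= k) for S a sum
   of independent Bernoulli(r) variables, r ranging over s (the Poisson
   binomial distribution). *)
Fixpoint poibin s k : R :=
  if s is r :: s' then
    r * (if k is k'.+1 then poibin s' k' else 0) + (1 - r) * poibin s' k
  else (k == 0%N)%:R.

Fixpoint poibin_tail s k : R :=
  if s is r :: s' then
    if k is k'.+1 then r * poibin_tail s' k' + (1 - r) * poibin_tail s' k else 1
  else (k == 0%N)%:R.

Lemma poibin_tail0 s : poibin_tail s 0 = 1.
Proof. by case: s. Qed.

Lemma poibin_tailE s k : poibin_tail s k = poibin s k + poibin_tail s k.+1.
Proof.
elim: s k => [|r s IH] [|k] /=; rewrite ?addr0 ?add0r //.
- have := IH 0%N; rewrite !poibin_tail0 => tail_s1.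
  by rewrite mulr0 add0r mulr1 addrCA -mulrDr -tail_s1; ring.
- by rewrite (IH k) (IH k.+1); ring.
Qed.

Lemma poibin_cons0 r s : poibin (r :: s) 0 = (1 - r) * poibin s 0.
Proof. by rewrite /= mulr0 add0r. Qed.

Lemma poibin_consS r s k :
  poibin (r :: s) k.+1 = r * poibin s k + (1 - r) * poibin s k.+1.
Proof. by []. Qed.

Lemma poibin_tail_cons r s k :
  poibin_tail (r :: s) k.+1 = r * poibin_tail s k + (1 - r) * poibin_tail s k.+1.
Proof. by []. Qed.

Lemma poibin_tail_consS r s k :
  poibin_tail (r :: s) k.+1 = poibin_tail s k.+1 + r * poibin s k.
Proof. by rewrite /= (poibin_tailE s k); ring. Qed.

Lemma poibin_tail_small s k : (size s < k)%N -> poibin_tail s k = 0.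
Proof.
elim: s k => [|r s IH] [|k] //= ltsk.
by rewrite !IH ?mulr0 ?addr0 // (ltn_trans _ ltsk).
Qed.

Lemma poibin_tail_sum s t :
  poibin_tail s t = \sum_(k < (size s).+1 | (t <= k)%N) poibin s k.
Proof.
have [lets|ltst] := leqP t (size s).+1; last first.
  rewrite poibin_tail_small ?(ltnW ltst) // big_pred0 // => k.
  by rewrite leqNgt (ltn_trans (ltn_ord k) ltst).
have tail_split d :
    poibin_tail s t =
    \sum_(t <= k < (t + d)%N) poibin s k + poibin_tail s (t + d)%N.
  elim: d => [|d IH]; first by rewrite addn0 big_geq // add0r.
  by rewrite IH addnS big_nat_recr ?leq_addr //= (poibin_tailE s (t + d)) addrA.
rewrite (tail_split ((size s).+1 - t)%N) subnKC // poibin_tail_small // addr0.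
by rewrite big_geq_mkord.
Qed.

Lemma poibin_tail_nseq_size y n : poibin_tail (nseq n y) n = y ^+ n.
Proof.
elim: n => [|n IH] //=.
by rewrite IH poibin_tail_small ?size_nseq // mulr0 addr0 exprS.
Qed.

Lemma poibin_nseq y m k :
  poibin (nseq m y) k = 'C(m, k)%:R * y ^+ k * (1 - y) ^+ (m - k).
Proof.
elim: m k => [|m IH] [|k] /=.
- by rewrite bin0 !expr0 !mulr1.
- by rewrite bin0n !mul0r.
- by rewrite mulr0 add0r IH bin0 !expr0 !mul1r subn0 exprS.
rewrite !IH binS natrD subSS.
have [ltmk|lekm] := ltnP m k.+1.
  by rewrite (bin_small ltmk) !mul0r mulr0 addr0 exprS; ring.
by rewrite -(subnSK lekm) !exprS; ring.
Qed.

End PoissonBinomial.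

Section PoissonBinomialPoly.
Context {R : comNzRingType}.

Lemma rmorph_poibin (S : comNzRingType) (f : {rmorphism R -> S}) s k :
  f (poibin s k) = poibin (map f s) k.
Proof.
elim: s k => [|r s IH] k /=; first by rewrite rmorph_nat.
by case: k => [|k];
  rewrite !(rmorphD, rmorphM, rmorphB, rmorphN, rmorph1, rmorph0) ?IH.
Qed.

Lemma rmorph_poibin_tail (S : comNzRingType) (f : {rmorphism R -> S}) s k :
  f (poibin_tail s k) = poibin_tail (map f s) k.
Proof.
elim: s k => [|r s IH] k /=; first by rewrite rmorph_nat.
by case: k => [|k]; rewrite !(rmorphD, rmorphM, rmorphB, rmorphN, rmorph1) ?IH.
Qed.

Lemma deriv_poibin_tail_nseq (y : {poly R}) n k :
  (poibin_tail (nseq n.+1 y) k.+1)^`() = n.+1%:R * y^`() * poibin (nseq n y) k.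
Proof.
elim: n k => [|n IH] k; first by rewrite /= !poly.derivE mul0rn; ring.
have deriv_tail_cons j : (poibin_tail (y :: nseq n.+1 y) j.+1)^`() =
    y^`() * poibin (nseq n.+1 y) j + y * (poibin_tail (nseq n.+1 y) j)^`() +
    (1 - y) * (n.+1%:R * y^`() * poibin (nseq n y) j).
  rewrite poibin_tail_cons derivD !derivM derivB deriv1 IH.
  by rewrite (poibin_tailE (nseq n.+1 y) j); ring.
rewrite -[nseq n.+2 y]/(y :: nseq n.+1 y) deriv_tail_cons.
rewrite [n.+2%:R](natrD _ 1 n.+1).
case: k => [|k]; rewrite ?IH ?poibin_tail0 ?deriv1.
  by rewrite -[nseq n.+1 y]/(y :: nseq n y) !poibin_cons0; ring.
by rewrite -[nseq n.+1 y]/(y :: nseq n y) !poibin_consS; ring.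
Qed.

Lemma deriv_poibin_tail_shift (p : R) n c :
  (poibin_tail ('X *+ n.+1 :: nseq n.+1 (p%:P - 'X)) c.+2)^`() =
  n.+1%:R * (p%:P - 'X - 'X *+ n.+1) *
  (poibin (nseq n (p%:P - 'X)) c - poibin (nseq n (p%:P - 'X)) c.+1).
Proof.
set Y := p%:P - 'X.
have dY : Y^`() = -1 by rewrite /Y derivB derivC derivX sub0r.
rewrite poibin_tail_cons derivD !derivM derivB deriv1 derivMn derivX.
rewrite !deriv_poibin_tail_nseq dY (poibin_tailE (nseq n.+1 Y) c.+1).
rewrite -[nseq n.+1 Y]/(Y :: nseq n Y) poibin_consS.
by ring.
Qed.

Definition poibin_poly (s : seq R) : {poly R} :=
  \prod_(r <- s) ((1 - r)%:P + r *: 'X).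

Lemma coef_poibin_poly s k : (poibin_poly s)`_k = poibin s k.
Proof.
elim: s k => [|r s IH] k; first by rewrite /poibin_poly big_nil coef1.
rewrite /poibin_poly big_cons mulrDl coefD coefCM -scalerAl coefZ coefXM.
by case: k => [|k]; rewrite /= -/(poibin_poly s) !IH addrC.
Qed.

Definition bernoulli_prod {N} (w : 'I_N -> R) (f : {ffun 'I_N -> bool}) : R :=
  \prod_(i < N) (if f i then w i else 1 - w i).

Lemma poibin_poly_ffun N (w : 'I_N -> R) :
  poibin_poly (codom w) =
  \sum_(f : {ffun 'I_N -> bool}) bernoulli_prod w f *: 'X^(nsucc f).
Proof.
rewrite /poibin_poly codomE big_map big_enum /=.
transitivity (\prod_(i < N) \sum_(b : bool) (if b then w i else 1 - w i) *: 'X^b).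
  by apply: eq_bigr => i _; rewrite big_bool /= expr1 expr0 alg_polyC addrC.
rewrite bigA_distr_bigA; apply: eq_bigr => f _.
by rewrite scaler_prod prodrXr.
Qed.

Lemma poibin_ffun N (w : 'I_N -> R) k :
  poibin (codom w) k =
  \sum_(f : {ffun 'I_N -> bool} | nsucc f == k) bernoulli_prod w f.
Proof. by rewrite -coef_poibin_poly poibin_poly_ffun coef_sumMXn. Qed.

Lemma poibin_tail_ffun N (w : 'I_N -> R) k :
  poibin_tail (codom w) k =
  \sum_(f : {ffun 'I_N -> bool} | (k <= nsucc f)%N) bernoulli_prod w f.
Proof.
rewrite poibin_tail_sum size_codom card_ord.
under eq_bigr do rewrite poibin_ffun big_mkcond.
rewrite exchange_big [RHS]big_mkcond /=; apply: eq_bigr => f _.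
rewrite -big_mkcondr.
under eq_bigl do rewrite eq_sym.
rewrite (big_ord1_cond_eq _ (fun _ => bernoulli_prod w f) (fun j => k <= j)%N).
by rewrite /= ltnS nsucc_le.
Qed.

End PoissonBinomialPoly.

Section PoissonBinomialOrder.
Context {R : realDomainType}.
Implicit Types (r : R) (s : seq R).

Lemma poibin_ge0 s k : all (fun r => 0 <= r <= 1) s -> 0 <= poibin s k.
Proof.
elim: s k => [|r s IH] k /=; first by rewrite ler0n.
move=> /andP[/andP[r0 r1] s01].
by case: k => [|k]; rewrite addr_ge0 ?mulr_ge0 ?subr_ge0 ?IH.
Qed.

Lemma poibin_tailS_le s k : all (fun r => 0 <= r <= 1) s ->
  poibin_tail s k.+1 <= poibin_tail s k.
Proof. by move=> s01; rewrite (poibin_tailE s k) lerDr poibin_ge0. Qed.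

Definition prob_le (a b : R) := [&& 0 <= a, a <= b & b <= 1].

Lemma poibin_tail_homo s1 s2 k :
  all2 prob_le s1 s2 -> poibin_tail s1 k <= poibin_tail s2 k.
Proof.
elim: s1 s2 k => [|a s1 IH] [|b s2] [|k] //= /andP[/and3P[a0 ab b1] le_s12].
have s2_01 : all (fun r => 0 <= r <= 1) s2.
  elim: s1 s2 le_s12 {IH} => [|x s1 IHs] [|y s2] //=.
  by move=> /andP[/and3P[x0 xy ->] /IHs ->]; rewrite (le_trans x0 xy).
have := IH _ k le_s12; have := IH _ k.+1 le_s12.
have := poibin_tailS_le s2 k s2_01; nra.
Qed.

Lemma poibin_nseqS_le r m c : 0 <= r <= 1 -> m.+1%:R * r <= c.+1%:R ->
  poibin (nseq m r) c.+1 <= poibin (nseq m r) c.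
Proof.
move=> /andP[r0 r1] mode_c; rewrite !poibin_nseq.
have [ltmc|lecm] := ltnP m c.+1.
  by rewrite (bin_small ltmc) !mul0r !mulr_ge0 ?exprn_ge0 ?subr_ge0.
have bin_rec : c.+1%:R * 'C(m, c.+1)%:R = (m%:R - c%:R) * 'C(m, c)%:R :> R.
  by rewrite -natrB ?(ltnW lecm) // -!natrM mul_bin_left.
rewrite -(subnSK lecm) !exprS -(ler_pM2l (ltr0Sn R c)).
pose K := r ^+ c * (1 - r) ^+ (m - c.+1).
have CK0 : 0 <= 'C(m, c)%:R * K by rewrite !mulr_ge0 ?exprn_ge0 ?subr_ge0.
rewrite (_ : _ * (_ * _ * _) = c.+1%:R * 'C(m, c.+1)%:R * (r * K)); last first.
  by rewrite /K; ring.
rewrite bin_rec (_ : _ * (_ * _ * _) = 'C(m, c)%:R * K * (c.+1%:R * (1 - r))).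
  by rewrite !mulrSr in mode_c *; nra.
by rewrite /K; ring.
Qed.

Lemma all2_prob_le_nseq (a b : R) n :
  prob_le a b -> all2 prob_le (nseq n a) (nseq n b).
Proof.
move=> le_ab.
by rewrite -[in nseq n a](size_nseq n b) all2_nseql // all_nseq le_ab orbT.
Qed.

Lemma binomial_tail_homo (a b : R) n k : prob_le a b ->
  poibin_tail (nseq n a) k <= poibin_tail (nseq n b) k.
Proof. by move=> le_ab; apply/poibin_tail_homo/all2_prob_le_nseq. Qed.

Lemma binomial_tail_lt (a b : R) n k : 0 < a < b -> b <= 1 -> (0 < k <= n)%N ->
  poibin_tail (nseq n a) k < poibin_tail (nseq n b) k.
Proof.
case: n k => [|n] [|k] // /andP[a0 ab] b1 /andP[_ le_kn].
have a1 : a < 1 by apply: lt_le_trans b1.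
apply: lt_le_trans (_ : poibin_tail (b :: nseq n a) k.+1 <= _).
  rewrite !poibin_tail_consS ltrD2l ltr_pM2r // poibin_nseq.
  by rewrite !mulr_gt0 ?ltr0n ?bin_gt0 ?exprn_gt0 ?subr_gt0.
have le_ab : prob_le a b by rewrite /prob_le (ltW a0) (ltW ab) b1.
apply: poibin_tail_homo; rewrite /= all2_prob_le_nseq // andbT.
by rewrite /prob_le lexx b1 (le_trans (ltW a0) (ltW ab)).
Qed.

End PoissonBinomialOrder.

Section BinomialTail.
Context {R : rcfType}.

(* The n + 2 success probabilities (n + 1) t, p - t, ..., p - t have a constant
   sum; the derivative of the tail in t is nonnegative while (n + 1) t <= p - t,
   since the binomial pmf is nonincreasing past its mode. *)
Lemma poibin_tail_shift_homo (p : R) n c :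
  0 <= p <= 1 -> n.+1%:R * p <= c.+1%:R ->
  {in `[0, p / n.+2%:R] &, {homo (fun t => poibin_tail
    (t *+ n.+1 :: nseq n.+1 (p - t)) c.+2) : t u / t <= u}}.
Proof.
move=> /andP[p0 p1] mode_p t u t_in u_in le_tu.
have Y_eval v : (p%:P - 'X).[v] = p - v.
  by rewrite hornerD hornerN hornerC hornerX.
pose F := poibin_tail ('X *+ n.+1 :: nseq n.+1 (p%:P - 'X)) c.+2.
have F_eval v : F.[v] = poibin_tail (v *+ n.+1 :: nseq n.+1 (p - v)) c.+2.
  rewrite -horner_evalE rmorph_poibin_tail /= map_nseq /horner_eval.
  by rewrite hornerMn hornerX Y_eval.
suff : F.[t] <= F.[u] by rewrite !F_eval.
apply: (ler_hornerW _ t_in u_in le_tu) => v.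
rewrite in_itv /= => /andP[v_gt0 v_lt].
rewrite deriv_poibin_tail_shift -horner_evalE !rmorphM !rmorphB rmorph_nat.
rewrite !rmorph_poibin /= map_nseq /horner_eval Y_eval hornerC hornerMn hornerX.
have vn_lt : v *+ n.+2 < p by rewrite -mulr_natr -ltr_pdivlMr ?ltr0n.
have v_lt_p : v < p.
  by apply: le_lt_trans vn_lt; rewrite mulrSr lerDr mulrn_wge0 ?ltW.
have pv01 : 0 <= p - v <= 1 by apply/andP; split; lra.
have mode_pv : n.+1%:R * (p - v) <= c.+1%:R.
  by apply: le_trans mode_p; rewrite ler_wpM2l ?ler0n //; lra.
rewrite !mulr_ge0 ?ler0n ?subr_ge0 ?poibin_nseqS_le //.
by move: vn_lt; rewrite mulrSr; lra.
Qed.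

Lemma binomial_tail_le_nseqS n c (lam : R) :
  (0 < n)%N -> 0 <= lam <= c.+1%:R -> lam <= n%:R ->
  poibin_tail (nseq n (lam / n%:R)) c.+2 <=
  poibin_tail (nseq n.+1 (lam / n.+1%:R)) c.+2.
Proof.
case: n => [//|n] _ /andP[lam0 lam_c] lam_n.
pose p := lam / n.+1%:R.
have p0 : 0 <= p by rewrite divr_ge0 ?ler0n.
have p1 : p <= 1 by rewrite ler_pdivrMr ?ltr0n // mul1r.
have np : n.+1%:R * p = lam by rewrite mulrC divfK ?pnatr_eq0.
pose d := p / n.+2%:R.
have d0 : 0 <= d by rewrite divr_ge0 ?ler0n.
have dn : d *+ n.+1 = lam / n.+2%:R.
  by rewrite /d /p -mulr_natr; field; rewrite !lt0r_neq0 // ltr_wpDr ?ler0n.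
have pd : p - d = lam / n.+2%:R.
  by rewrite /d /p; field; rewrite !lt0r_neq0 // ltr_wpDr ?ler0n.
have d_in : d \in `[0, p / n.+2%:R] by rewrite in_itv /= d0 lexx.
have := poibin_tail_shift_homo p n c _ _ 0 d _ d_in d0; cbv beta.
rewrite dn pd mul0rn subr0 poibin_tail_cons mul0r add0r subr0 mul1r; apply.
- by rewrite p0 p1.
- by rewrite np.
- by rewrite in_itv /= lexx d0.
Qed.

Lemma binomial_tail_ge_pow c N : (c.+1 < N)%N ->
  (c.+1%:R / c.+2%:R) ^+ c.+2 <= poibin_tail (nseq N (c.+1%:R / N%:R)) c.+2 :> R.
Proof.
elim: N => [//|N IH]; rewrite ltnS leq_eqVlt => /orP[/eqP <-|ltcN].
  by rewrite poibin_tail_nseq_size.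
apply: le_trans (IH ltcN) _; apply: binomial_tail_le_nseqS.
- exact: ltn_trans (ltn0Sn c) ltcN.
- by rewrite ler0n lexx.
- by rewrite ler_nat ltnW.
Qed.

End BinomialTail.

Section PowerBound.
Context {R : realFieldType}.

Lemma expr_div_succ_le k :
  (k%:R / k.+1%:R) ^+ k.+1 <= (k.+1%:R / k.+2%:R) ^+ k.+2 :> R.
Proof.
(* AM-GM for one 1 and k + 1 copies of k / (k + 1). *)
pose E (i : 'I_k.+2) : R := if i == ord0 then 1 else k%:R / k.+1%:R.
have E0 : {in predT, forall i, 0 <= E i}.
  by move=> i _; rewrite /E; case: eqP => _; rewrite ?divr_ge0 ?ler0n.
have := (leif_AGM E0).1.
rewrite cardT size_enum_ord.
rewrite big_ord_recl [X in _ <= (X / _) ^+ _ -> _]big_ord_recl /E /=.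
rewrite mul1r prodr_const sumr_const card_ord.
have -> : k%:R / k.+1%:R *+ k.+1 = k%:R :> R.
  by rewrite -mulr_natr divfK ?pnatr_eq0.
by rewrite -natr1 addrC.
Qed.

Lemma quarter_lt_expr_div_succ k :
  (2 <= k)%N -> 4%:R^-1 < (k%:R / k.+1%:R) ^+ k.+1 :> R.
Proof.
elim: k => [//|k IH]; rewrite leq_eqVlt => /orP[/eqP <-|lt1k].
  rewrite expr_div_n -!natrX /=; lra.
exact: lt_le_trans (IH lt1k) (expr_div_succ_le k).
Qed.

End PowerBound.

Section QuarterBound.
Context {R : rcfType}.

Lemma poibin_tail_gt_quarter (s : seq R) p c :
  {in s, forall r, p <= r < 1} -> 1 < (size s)%:R * p ->
  c.+1%:R <= (size s)%:R * p -> 4%:R^-1 < poibin_tail s c.+2.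
Proof.
move=> s_ge_p Np_gt1 c_le_Np.
have N_gt0 : (0 < size s)%N.
  by rewrite lt0n; apply: contraTneq Np_gt1 => ->; rewrite mul0r ltr10.
have /hasP[r s_r _] : has predT s by rewrite has_predT.
have p_lt1 : p < 1 by case/andP: (s_ge_p r s_r) => pr /(le_lt_trans pr).
set N := size s in N_gt0 Np_gt1 c_le_Np *.
have N_gt0R : 0 < N%:R :> R by rewrite ltr0n.
have p_gt0 : 0 < p by rewrite -(pmulr_rgt0 p N_gt0R) (lt_trans ltr01 Np_gt1).
have ltcN : (c.+1 < N)%N.
  by rewrite -(ltr_nat R); apply: le_lt_trans c_le_Np _; rewrite gtr_pMr.
have s_tail k : poibin_tail (nseq N p) k <= poibin_tail s k.
  apply/poibin_tail_homo/all2_nseql/allP => r' /s_ge_p /andP[pr r1].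
  by rewrite /prob_le (ltW p_gt0) pr (ltW r1).
have a_le_p : prob_le (c.+1%:R / N%:R) p.
  rewrite /prob_le divr_ge0 ?ler0n //= ler_pdivrMr //.
  by rewrite mulrC c_le_Np (ltW p_lt1).
case: c => [|c] in c_le_Np ltcN a_le_p *.
  (* (1/2)^2 is exactly 1/4: strictness comes from 1/N < p. *)
  have -> : 4%:R^-1 = (1%:R / 2%:R) ^+ 2 :> R by rewrite expr_div_n -!natrX; lra.
  apply: le_lt_trans (binomial_tail_ge_pow _ _ ltcN) (lt_le_trans _ (s_tail _)).
  apply: binomial_tail_lt; [|exact: ltW|exact: ltcN].
  by rewrite divr_gt0 //= ltr_pdivrMr // mulrC.
apply: lt_le_trans (quarter_lt_expr_div_succ c.+2 _) _ => //.
apply: le_trans (binomial_tail_ge_pow _ _ ltcN) (le_trans _ (s_tail _)).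
exact: binomial_tail_homo.
Qed.

End QuarterBound.

Definition outcome_set {T : Type} {N} (z : 'I_N -> T -> bool)
  (f : {ffun 'I_N -> bool}) : set T := [set w | forall i, z i w = f i].

Section BernoulliLaw.
Context {d : measure_display} {T : measurableType d} {R : realType}.
Context {P : probability T R} {N : nat} {z : 'I_N -> T -> bool} {q : 'I_N -> R}.
Hypothesis zq : indep_bernoulli P z q.

Let z_false i : [set w | z i w = false] = ~` [set w | z i w].
Proof. by apply/seteqP; split => w /=; case: (z i w). Qed.

Lemma measurable_outcome_set f : measurable (outcome_set z f).
Proof.
case: zq => mz _ _.
have -> : outcome_set z f = \bigcap_(i in [set: 'I_N]) [set w | z i w = f i].
  by apply/seteqP; split => [w zw i _|w zw i]; [exact: zw | exact: zw i I].
apply: fin_bigcap_measurable => // i _.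
by case: (f i); [exact: mz | rewrite z_false; exact/measurableC/mz].
Qed.

Lemma prob_outcome_set f : P (outcome_set z f) = (bernoulli_prod q f)%:E.
Proof.
case: zq => mz Pz Pz_joint; rewrite /outcome_set Pz_joint.
congr (_%:E); apply: eq_bigr => i _.
by case: (f i); rewrite ?z_false ?probability_setC ?Pz.
Qed.

Lemma prob_nsucc (A : pred nat) :
  P [set w | A (nsucc (z^~ w))] =
  (\sum_(f : {ffun 'I_N -> bool} | A (nsucc f)) bernoulli_prod q f)%:E.
Proof.
pose D : {pred {ffun 'I_N -> bool}} := [pred f : {ffun _ -> _} | A (nsucc f)].
have -> : [set w | A (nsucc (z^~ w))] = \bigcup_(f in [set` D]) outcome_set z f.
  apply/seteqP; split => w /=.
    move=> Aw; exists [ffun i => z i w]; last by move=> i; rewrite ffunE.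
    by rewrite /= inE /D /= /nsucc; under eq_bigr do rewrite ffunE.
  move=> [f]; rewrite /= inE /D /= /nsucc => Af zf.
  by under eq_bigr do rewrite zf.
rewrite measure_fin_bigcup //; last 2 first.
- by move=> f g _ _ [w [/= zf zg]]; apply/ffunP => i; rewrite -zf -zg.
- by move=> f _; apply: measurable_outcome_set.
rewrite (eq_fsbigr (fun f => (bernoulli_prod q f)%:E)); last first.
  by move=> f _; apply: prob_outcome_set.
rewrite -(@bigfs _ _ _ _ (index_enum _)) ?index_enum_uniq //.
  by rewrite sumEFin.
by move=> f _; rewrite mem_index_enum.
Qed.

Lemma prob_nsucc_ge k :
  P [set w | (k <= nsucc (z^~ w))%N] = (poibin_tail (codom q) k)%:E.
Proof. by rewrite (prob_nsucc (fun n => k <= n)%N) poibin_tail_ffun. Qed.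

End BernoulliLaw.

Theorem lemma11 (d : measure_display) (T : measurableType d) (R : realType)
  (P : probability T R) (N : nat) (z : 'I_N -> T -> bool) (q : 'I_N -> R)
  (hN : (0 < N)%N)
  (hq : forall i, 0 < q i < 1)
  (hz : indep_bernoulli P z q)
  (hmin : qmin q > N%:R^-1) :
  ((4%:R^-1 : R)%:E < P [set w | (N%:R * qmin q < bsum R z w)%R])%E.
Proof.
set p := qmin q in hmin *.
have p_le_q i : p <= q i by rewrite /p /qmin (bigD1 i) //= ge_min lexx.
have N_gt0 : 0 < N%:R :> R by rewrite ltr0n.
have Np_gt1 : 1 < N%:R * p by rewrite -(ltr_pM2l N_gt0) mulfV ?gt_eqF in hmin.
have Np_ge0 : 0 <= N%:R * p by rewrite ltW // (lt_trans ltr01).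
have [c truncE] : exists c, Num.truncn (N%:R * p) = c.+1.
  by exists (Num.truncn (N%:R * p)).-1; rewrite prednK // truncn_gt0 ltW.
have -> : [set w | N%:R * p < bsum R z w] = [set w | (c.+2 <= nsucc (z^~ w))%N].
  by apply: eq_set => w; rewrite -truncn_lt_nat // truncE.
rewrite (prob_nsucc_ge hz) lte_fin; apply: (poibin_tail_gt_quarter _ p).
- by move=> r /codomP[i ->]; rewrite p_le_q; case/andP: (hq i).
- by rewrite size_codom card_ord.
- by rewrite size_codom card_ord -truncE truncn_le.
Qed.
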